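(* Let $j\ge 0$ be an integer and let $g_0^{j+1},\dots,g_j^{j+1}$ be real numbers with $g_j^{j+1}>g_{j-1}^{j+1}>\dots>g_0^{j+1}>0$, where $g_{-1}^{j+1}:=0$. Let $\sigma_{j+1}$ satisfy $$\frac{g_j^{j+1}}{2g_j^{j+1}-g_{j-1}^{j+1}}\le\sigma_{j+1}\le 1 .$$ Then for any real numbers $v^0,\dots,v^{j+1}$, $$\big(\sigma_{j+1}v^{j+1}+(1-\sigma_{j+1})v^j\big)\,{}_g\Delta v\;\ge\;\tfrac12\,{}_g\Delta(v^2),$$ where ${}_g\Delta v:=\sum_{s=0}^{j}(v^{s+1}-v^s)g_s^{j+1}$ and ${}_g\Delta(v^2):=\sum_{s=0}^{j}((v^{s+1})^2-(v^s)^2)g_s^{j+1}$.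
   Context: In the paper this is stated for all $j=0,1,\dots,M-1$ with $v$ a function on a time mesh $0=t_0<\dots<t_M=T$, $v^s=v(t_s)$. *)

From mathcomp Require Import all_boot all_order all_algebra.
Set Implicit Arguments. Unset Strict Implicit. Unset Printing Implicit Defensive.
Import Order.TTheory GRing.Theory Num.Theory.
Local Open Scope ring_scope.

(* g s stands for g_s^{j+1}; v s stands for v^s. *)

Definition gprev (R : ringType) (g : nat -> R) (j : nat) : R :=
  if j is j'.+1 then g j' else 0.

Definition gDelta (R : ringType) (g : nat -> R) (j : nat) (v : nat -> R) : R :=
  \sum_(0 <= s < j.+1) (v s.+1 - v s) * g s.

Definition gDelta_sq (R : ringType) (g : nat -> R) (j : nat) (v : nat -> R) : R :=
  \sum_(0 <= s < j.+1) (v s.+1 ^+ 2 - v s ^+ 2) * g s.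

From mathcomp Require Import all_boot all_order all_algebra.
From mathcomp Require Import ring lra.
Set Implicit Arguments.
Unset Strict Implicit.
Unset Printing Implicit Defensive.
Import Order.TTheory GRing.Theory Num.Theory.
Local Open Scope ring_scope.

(* Summation by parts rewrites both differences with the nonnegative weights
   a_s := g_s - g_{s-1}, whose total is g_j.  For any w, the s-th term of
   2 w Delta v - Delta (v^2) is then a_s ((w - v^s)^2 - (v^{j+1} - w)^2), so
   for w = sigma v^{j+1} + (1 - sigma) v^j the difference is at least
   a_j (w - v^j)^2 - g_j (v^{j+1} - w)^2 = ((g_j - g_{j-1}) sigma^2
   - g_j (1 - sigma)^2) (v^{j+1} - v^j)^2, nonnegative under the bounds on sigma. *)

Lemma sum_gprev_increments (R : nzRingType) (g : nat -> R) (n : nat) :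
  \sum_(0 <= s < n.+1) (g s - gprev g s) = g n.
Proof. by rewrite big_nat_recl // telescope_sumr // subr0 addrC subrK. Qed.

Lemma sum_gprev_increments_lt (R : nzRingType) (g : nat -> R) (j : nat) :
  \sum_(0 <= s < j) (g s - gprev g s) = gprev g j.
Proof. by case: j => [|j]; [rewrite big_geq | rewrite sum_gprev_increments]. Qed.

Lemma sum_by_parts_gprev (R : comNzRingType) (g f : nat -> R) (n : nat) :
  \sum_(0 <= s < n.+1) (f s.+1 - f s) * g s =
  \sum_(0 <= s < n.+1) (g s - gprev g s) * (f n.+1 - f s).
Proof.
elim: n => [|n IHn]; first by rewrite !big_nat1 /=; ring.
rewrite big_nat_recr //= IHn [RHS]big_nat_recr //=.
have split_last s : (g s - gprev g s) * (f n.+2 - f s) =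
    (g s - gprev g s) * (f n.+1 - f s) + (g s - gprev g s) * (f n.+2 - f n.+1).
  by ring.
under [X in _ = X + _]eq_bigr do rewrite split_last.
by rewrite big_split /= -mulr_suml sum_gprev_increments; ring.
Qed.

Lemma gDelta_defect (R : comNzRingType) (g : nat -> R) (j : nat) (v : nat -> R)
    (w : R) :
  2 * (w * gDelta g j v) - gDelta_sq g j v =
  \sum_(0 <= s < j.+1) (g s - gprev g s) * ((w - v s) ^+ 2 - (v j.+1 - w) ^+ 2).
Proof.
rewrite /gDelta /gDelta_sq (sum_by_parts_gprev g v)
  (sum_by_parts_gprev g (fun s => v s ^+ 2)) mulr_sumr mulr_sumr -sumrB.
by apply: eq_bigr => s _; ring.
Qed.

Section IncreasingWeights.

Variables (R : realFieldType) (g : nat -> R) (j : nat).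
Hypothesis g0_pos : 0 < g 0%N.
Hypothesis g_incr : forall s : nat, (s < j)%N -> g s < g s.+1.

Lemma incr_weight_gt0 (s : nat) : (s <= j)%N -> 0 < g s.
Proof.
elim: s => [//|s IHs] ltsj.
exact: lt_trans (IHs (ltnW ltsj)) (g_incr ltsj).
Qed.

Lemma gprev_lt (s : nat) : (s <= j)%N -> gprev g s < g s.
Proof. by case: s => [|s] lesj //=; apply: g_incr. Qed.

Lemma gprev_ge0 (s : nat) : (s <= j)%N -> 0 <= gprev g s.
Proof. by case: s => [|s] lesj //=; rewrite ltW // incr_weight_gt0 // ltnW. Qed.

End IncreasingWeights.

Lemma one_sub_sq_weight_le (R : realFieldType) (gj A sigma : R) :
  0 <= A -> 0 <= sigma -> sigma <= 1 -> gj <= sigma * (2 * gj - A) ->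
  gj * (1 - sigma) ^+ 2 <= (gj - A) * sigma ^+ 2.
Proof.
move=> A_ge0 sigma_ge0 sigma_le1 sigma_lo.
rewrite -subr_ge0 (_ : _ - _ = sigma * (2 * gj - A) - gj + sigma * A * (1 - sigma)).
  by rewrite addr_ge0 ?subr_ge0 // !mulr_ge0 // subr_ge0.
by ring.
Qed.

Theorem corollary1 (R : realFieldType) (j : nat) (g : nat -> R) (sigma : R)
    (g0_pos : 0 < g 0%N)
    (g_incr : forall s : nat, (s < j)%N -> g s < g s.+1)
    (sigma_lo : g j / (2 * g j - gprev g j) <= sigma)
    (sigma_hi : sigma <= 1)
    (v : nat -> R) :
  (sigma * v j.+1 + (1 - sigma) * v j) * gDelta g j v >= 2^-1 * gDelta_sq g j v.
Proof.
set w := sigma * v j.+1 + (1 - sigma) * v j.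
have gj_gt0 := incr_weight_gt0 g0_pos g_incr (leqnn j).
have A_lt_gj := gprev_lt g0_pos g_incr (leqnn j).
have A_ge0 := gprev_ge0 g0_pos g_incr (leqnn j).
have den_gt0 : 0 < 2 * g j - gprev g j by lra.
have sigma_ge0 : 0 <= sigma by apply: le_trans sigma_lo; rewrite ltW ?divr_gt0.
rewrite ler_pdivrMr // in sigma_lo.
have weights : 0 <= (g j - gprev g j) * sigma ^+ 2 - g j * (1 - sigma) ^+ 2.
  by rewrite subr_ge0 one_sub_sq_weight_le.
suff : 0 <= 2 * (w * gDelta g j v) - gDelta_sq g j v by lra.
rewrite gDelta_defect big_nat_recr //=.
under eq_bigr do rewrite mulrBr.
rewrite sumrB -mulr_suml sum_gprev_increments_lt.
have earlier_ge0 : 0 <= \sum_(0 <= s < j) (g s - gprev g s) * (w - v s) ^+ 2.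
  rewrite big_nat; apply: sumr_ge0 => s /andP[_ ltsj].
  by rewrite mulr_ge0 ?sqr_ge0 // subr_ge0 ltW // (gprev_lt g0_pos g_incr (ltnW ltsj)).
have -> : w - v j = sigma * (v j.+1 - v j) by rewrite /w; ring.
have -> : v j.+1 - w = (1 - sigma) * (v j.+1 - v j) by rewrite /w; ring.
have := mulr_ge0 (sqr_ge0 (v j.+1 - v j)) weights.
lra.
Qed.
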